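(* Let $(S,\Delta,\mathbb{P})$ be a probability space, $(U,d)$ a separable metric space, $\mathfrak{X}$ the set of $U$-valued random variables on $S$, $r\geq 0$, $\underline{X}=\{X_n\}_{n\in\mathbb{N}}$ a sequence in $\mathfrak{X}$, and $\mathcal{I}$ an analytic $P$-ideal on $\mathbb{N}$. Then the set $\mathcal{I}^{\mathbb{P}}\text{-}LIM^r\underline{X}$ is a Borel set of type $F_{\sigma\delta}$ in $(\mathfrak{X}^0,\rho)$.
   Context: The Ky Fan metric is $\rho(X,Y)=\inf\{\varepsilon>0:\mathbb{P}(d(X,Y)>\varepsilon)\leq\varepsilon\}$; $\mathfrak{X}^0$ is the set of equivalence classes of $\mathfrak{X}$ under almost sure equality, on which $\rho$ is a metric. A submeasure on $\mathbb{N}$ is $\varphi:\mathcal{P}(\mathbb{N})\to[0,\infty]$ with $\varphi(\varnothing)=0$, monotone, subadditive, and $\varphi(\{t\})<\infty$ for all $t$; it is lower semicontinuous if $\varphi(A)=\lim_{t\to\infty}\varphi(A\cap[1,t])$ for all $A$. An ideal $\mathcal{I}$ on $\mathbb{N}$ is an analytic $P$-ideal if $\mathcal{I}=Exh(\varphi)=\{A\subseteq\mathbb{N}:\lim_{t\to\infty}\varphi(A\setminus\{1,\dots,t\})=0\}$ for some lower semicontinuous submeasure $\varphi$. The set $\mathcal{I}^{\mathbb{P}}\text{-}LIM^r\underline{X}$ consists of all $X_*\in\mathfrak{X}$ with $\{n\in\mathbb{N}:\mathbb{P}(d(X_n,X_* )>r+\varepsilon)>\delta\}\in\mathcal{I}$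 for every $\varepsilon,\delta>0$ (regarded as a subset of $\mathfrak{X}^0$). An $F_{\sigma\delta}$ set is a countable intersection of countable unions of closed sets. *)

From HB Require Import structures.
From mathcomp Require Import all_boot all_order all_algebra.
From mathcomp Require Import all_classical all_reals all_analysis.
Set Implicit Arguments. Unset Strict Implicit. Unset Printing Implicit Defensive.
Import Order.TTheory GRing.Theory Num.Theory.
Local Open Scope classical_set_scope.
Local Open Scope ring_scope.

Section Defs.
Variable R : realType.

Definition is_metric (U : Type) (dist : U -> U -> R) : Prop :=
  (forall x y, 0 <= dist x y) /\
  (forall x y, dist x y = 0 <-> x = y) /\
  (forall x y, dist x y = dist y x) /\
  (forall x y z, dist x z <= dist x y + dist y z).

Definition separable_metric (U : Type) (dist : U -> U -> R) : Prop :=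
  exists D : set U, countable D /\
    forall x (e : R), 0 < e -> exists2 y, D y & dist x y < e.

Definition metric_open (U : Type) (dist : U -> U -> R) (A : set U) : Prop :=
  forall x, A x -> exists2 e : R, 0 < e & forall y, dist x y < e -> A y.

Definition is_rv d (S : measurableType d) (U : Type) (dist : U -> U -> R)
    (X : S -> U) : Prop :=
  forall B, <<s metric_open dist >> B -> measurable (X @^-1` B).

Definition kyfan d (S : measurableType d) (P : probability S R) (U : Type)
    (dist : U -> U -> R) (X Y : S -> U) : R :=
  inf [set e : R | 0 < e /\
       (P [set w | (e < dist (X w) (Y w))%R] <= e%:E)%E].

(** closed sets of the Ky Fan (pseudo)metric on the space of random
    variables (equivalently, preimages of closed subsets of the quotient
    space X^0 of a.s.-equivalence classes) *)
Definition kyfan_closed d (S : measurableType d) (P : probability S R)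
    (U : Type) (dist : U -> U -> R) (C : set (S -> U)) : Prop :=
  C `<=` is_rv dist /\
  forall X, is_rv dist X ->
    (forall e : R, 0 < e -> exists2 Y, C Y & kyfan P dist X Y < e) -> C X.

Definition kyfan_Fsigmadelta d (S : measurableType d) (P : probability S R)
    (U : Type) (dist : U -> U -> R) (A : set (S -> U)) : Prop :=
  exists F : nat -> nat -> set (S -> U),
    (forall i j, kyfan_closed P dist (F i j)) /\
    A = \bigcap_i \bigcup_j F i j.

Definition IP_LIM d (S : measurableType d) (P : probability S R)
    (U : Type) (dist : U -> U -> R) (I : set (set nat)) (r : R)
    (Xs : nat -> S -> U) : set (S -> U) :=
  [set Xs_ | is_rv dist Xs_ /\
     forall eps delta : R, 0 < eps -> 0 < delta ->
       I [set n | (delta%:E < P [set w | (r + eps < dist (Xs n w) (Xs_ w))%R])%E]].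
End Defs.

Definition submeasure {R : realType} (phi : set nat -> \bar R) : Prop :=
  phi set0 = 0%E /\
  (forall A, (0 <= phi A)%E) /\
  (forall A B, A `<=` B -> (phi A <= phi B)%E) /\
  (forall A B, (phi (A `|` B) <= phi A + phi B)%E) /\
  (forall t, (phi [set t] < +oo)%E).

Definition lsc_submeasure {R : realType} (phi : set nat -> \bar R) : Prop :=
  submeasure phi /\
  forall A, (fun t => phi (A `&` [set n | (n <= t)%N])) @ \oo --> phi A.

Definition Exh {R : realType} (phi : set nat -> \bar R) : set (set nat) :=
  [set A | (fun t => phi (A `\` [set n | (n <= t)%N])) @ \oo --> 0%E].

Definition is_ideal (I : set (set nat)) : Prop :=
  I set0 /\
  (forall A B, A `<=` B -> I B -> I A) /\
  (forall A B, I A -> I B -> I (A `|` B)) /\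
  ~ I setT.

Definition analytic_P_ideal (R : realType) (I : set (set nat)) : Prop :=
  is_ideal I /\ exists phi : set nat -> \bar R, lsc_submeasure phi /\ I = Exh phi.

From HB Require Import structures.
From mathcomp Require Import all_boot all_order all_algebra.
From mathcomp Require Import all_classical all_reals all_analysis.
From mathcomp Require Import lra.
Import Order.TTheory GRing.Theory Num.Theory.
Local Open Scope classical_set_scope.
Local Open Scope ring_scope.
Set Implicit Arguments. Unset Strict Implicit. Unset Printing Implicit Defensive.

(* With [A(X; a, delta) = {n | P (d(X_n, X) > a) > delta}] and [I = Exh phi],
   [X] is a rough limit iff for every [i] some tail
   [phi (A(X; r + 1/(i+1), 1/(i+1)) \ [0, t])] is at most [1/(i+1)], because
   [A(X; r + eps, delta)] shrinks as [eps] and [delta] grow.  Each set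
   [{X | phi (A(X; a, delta) \ [0, t]) <= b}] is Ky Fan closed: a strict
   inequality [P (d(X_n, X) > a) > delta] persists for all [Y] Ky-Fan-close to
   [X] (continuity of [P] from below and a union bound), for finitely many [n]
   at a time, and lower semicontinuity reduces [phi] to finite initial
   segments. *)

Section ExtendedRealSequences.
Variable R : realType.
Implicit Types (u : (\bar R)^nat) (l x : \bar R).

Lemma cvge_exists_gt u l x : u @ \oo --> l -> (x < l)%E -> exists n, (x < u n)%E.
Proof.
move=> ul xl; apply: contrapT => no_gt.
suff : (l <= x)%E by rewrite leNgt xl.
apply: (cvge_to_le ul); apply: nearW => n.
by rewrite leNgt; apply/negP => xu; apply: no_gt; exists n.
Qed.

Lemma cvge_exists_lt u l x : u @ \oo --> l -> (l < x)%E -> exists n, (u n < x)%E.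
Proof.
move=> ul lx; apply: contrapT => no_lt.
suff : (x <= l)%E by rewrite leNgt lx.
apply: (cvge_to_ge ul); apply: nearW => n.
by rewrite leNgt; apply/negP => ux; apply: no_lt; exists n.
Qed.

Lemma nonincreasing_cvge0P u : nonincreasing_seq u -> (forall n, 0 <= u n)%E ->
  u @ \oo --> 0%E <-> forall e : R, 0 < e -> exists n, (u n <= e%:E)%E.
Proof.
move=> u_noninc u_ge0; split=> [u0 e e0|small].
  have [n /ltW] : exists n, (u n < e%:E)%E by apply: cvge_exists_lt u0 _; rewrite lte_fin.
  by exists n.
suff <- : ereal_inf (range u) = 0%E by exact: ereal_nonincreasing_cvgn.
apply/eqP; rewrite eq_le; apply/andP; split.
  apply/lee_addgt0Pr => e e0; rewrite add0e.
  by have [n un] := small e e0; apply: ge_ereal_inf; exists (u n).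
by apply: le_ereal_inf_tmp => _ [n _ <-].
Qed.

End ExtendedRealSequences.

Lemma exists_radius_forall_leq (R : realType) (T : Type) (f : T -> R)
    (Q : nat -> T -> Prop) :
  (forall n, exists2 e, 0 < e & forall x, f x < e -> Q n x) ->
  forall s, exists2 e, 0 < e & forall x, f x < e -> forall n, (n <= s)%N -> Q n x.
Proof.
move=> radius; elim=> [|s [e e0 Qe]].
  have [e e0 Qe] := radius 0%N.
  by exists e => // x fx n; rewrite leqn0 => /eqP ->; exact: Qe.
have [e' e'0 Qe'] := radius s.+1.
exists (Num.min e e'); first by rewrite lt_min e0 e'0.
move=> x; rewrite lt_min => /andP[fxe fxe'] n; rewrite leq_eqVlt => /orP[/eqP ->|ns].
  exact: Qe'.
exact: Qe.
Qed.

Section ExhaustiveIdeal.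
Variables (R : realType) (phi : set nat -> \bar R).
Hypotheses (phi_ge0 : forall A, (0 <= phi A)%E)
  (phi_mono : forall A B, A `<=` B -> (phi A <= phi B)%E).

Lemma Exh_tailP (A : set nat) : Exh phi A <->
  forall e : R, 0 < e -> exists t, (phi (A `\` [set n | (n <= t)%N]) <= e%:E)%E.
Proof.
apply: nonincreasing_cvge0P => // m n mn; apply: phi_mono => k [Ak kn].
by split=> // km; apply: kn; exact: leq_trans km mn.
Qed.

End ExhaustiveIdeal.

Section KyFanTopology.
Variables (R : realType) (U : Type) (dist : U -> U -> R).
Hypothesis hmet : is_metric dist.

Lemma metric_open_dist_lt (z : U) (c : R) : metric_open dist [set u | dist u z < c].
Proof.
have [_ [_ [dC dtri]]] := hmet.
move=> x /= xz; exists (c - dist x z) => [|y xy]; first by rewrite subr_gt0.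
by have := dtri y x z; have := dC y x; lra.
Qed.

Lemma metric_open_dist_gt (z : U) (c : R) : metric_open dist [set u | c < dist z u].
Proof.
have [_ [_ [dC dtri]]] := hmet.
move=> x /= zx; exists (dist z x - c) => [|y xy]; first by rewrite subr_gt0.
by have := dtri z y x; have := dC y x; lra.
Qed.

Variables (d : measure_display) (S : measurableType d).
Hypothesis hsep : separable_metric dist.

Lemma rv_preimage_open (X : S -> U) (B : set U) :
  is_rv dist X -> metric_open dist B -> measurable (X @^-1` B).
Proof. by move=> Xrv Bopen; apply: Xrv; exact: sub_sigma_algebra. Qed.

(* Separability makes [{a < dist X Y}] a countable union of "rectangles"
   [X^-1 (ball z eta) `&` Y^-1 {a + eta < dist z .}] with [z] in the dense set. *)
Lemma measurable_dist_gt (X Y : S -> U) (a : R) :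
  is_rv dist X -> is_rv dist Y -> measurable [set w | a < dist (X w) (Y w)].
Proof.
move=> Xrv Yrv; have [_ [_ [dC dtri]]] := hmet.
have [D [/countable_injP [f finj] Ddense]] := hsep.
pose eta (k : nat) : R := k.+1%:R^-1.
have eta_gt0 k : 0 < eta k by rewrite invr_gt0 ltr0n.
pose rect (z : {z | D z}) k := X @^-1` [set u | dist u (sval z) < eta k] `&`
  Y @^-1` [set u | a + eta k < dist (sval z) u].
have -> : [set w | a < dist (X w) (Y w)] = \bigcup_z \bigcup_k rect z k.
  apply/seteqP; split=> w /=.
    move=> aXY; have [k] : exists k, 0 + eta k < (dist (X w) (Y w) - a) / 2.
      by apply: ltr_add_invr; lra.
    rewrite add0r => etak; have [z Dz Xz] := Ddense (X w) (eta k) (eta_gt0 k).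
    exists (exist _ z Dz) => //; exists k => //; split => /=; first lra.
    by have := dtri (X w) z (Y w); lra.
  move=> [[z Dz] _ [k _ [/= Xz zY]]].
  by have := dtri z (X w) (Y w); have := dC z (X w); have := eta_gt0 k; lra.
apply: countable_bigcupT_measurable => [|z].
  apply/countable_injP; exists (f \o sval) => -[x Dx] [y Dy] _ _ /= fxy.
  by apply: eq_exist; apply: finj; rewrite ?inE.
apply: bigcupT_measurable => k; apply: measurableI.
  by apply: (rv_preimage_open Xrv); exact: metric_open_dist_lt.
by apply: (rv_preimage_open Yrv); exact: metric_open_dist_gt.
Qed.

Variable P : probability S R.

Lemma probability_fineK (A : set S) : measurable A -> P A = (fine (P A))%:E.
Proof. by move=> mA; rewrite fineK // fin_num_measure. Qed.

Lemma kyfan_lt (X Y : S -> U) (e : R) : is_rv dist X -> is_rv dist Y ->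
  kyfan P dist X Y < e ->
  exists2 e', e' < e & (P [set w | (e' < dist (X w) (Y w))%R] <= e'%:E)%E.
Proof.
move=> Xrv Yrv /inf_lt[]; last by move=> e' [_ ?] ?; exists e'.
exists 1; split => //; apply: probability_le1; exact: measurable_dist_gt.
Qed.

Lemma prob_dist_gt_margin (Z X : S -> U) (a delta : R) :
  is_rv dist Z -> is_rv dist X ->
  (delta%:E < P [set w | (a < dist (Z w) (X w))%R])%E ->
  exists2 eta, 0 < eta & (delta%:E < P [set w | (a + eta < dist (Z w) (X w))%R])%E.
Proof.
move=> Zrv Xrv.
pose F k := [set w | a + k.+1%:R^-1 < dist (Z w) (X w)].
have mF k : measurable (F k) by exact: measurable_dist_gt.
have F_nd : nondecreasing_seq F.
  move=> i j ij; apply/subsetPset => w; apply: le_lt_trans.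
  by rewrite lerD2l lef_pV2 ?posrE ?ltr0n // ler_nat.
have -> : [set w | a < dist (Z w) (X w)] = \bigcup_k F k.
  apply/seteqP; split=> w /=; first by move=> /ltr_add_invr[k]; exists k.
  by move=> [k _ /=]; apply: le_lt_trans; rewrite lerDl.
move=> /(cvge_exists_gt (nondecreasing_cvg_mu mF (bigcupT_measurable F mF) F_nd)).
by move=> [k PFk]; exists k.+1%:R^-1; rewrite ?invr_gt0 ?ltr0n.
Qed.

Lemma prob_dist_gt_stable (Z X : S -> U) (a delta : R) :
  is_rv dist Z -> is_rv dist X ->
  (delta%:E < P [set w | (a < dist (Z w) (X w))%R])%E ->
  exists2 e, 0 < e & forall Y, is_rv dist Y -> kyfan P dist X Y < e ->
    (delta%:E < P [set w | (a < dist (Z w) (Y w))%R])%E.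
Proof.
move=> Zrv Xrv /(prob_dist_gt_margin Zrv Xrv)[eta eta_gt0].
have [_ [_ [dC dtri]]] := hmet.
set A := [set w | _ < dist (Z w) (X w)].
have mA : measurable A by exact: measurable_dist_gt.
rewrite (probability_fineK mA) lte_fin => PA.
exists (Num.min eta (fine (P A) - delta)); first by rewrite lt_min eta_gt0 subr_gt0.
move=> Y Yrv /(kyfan_lt Xrv Yrv)[e' + PC]; rewrite lt_min => /andP[e'eta e'PA].
set B := [set w | _ < dist (Z w) (Y w)]; set C := [set w | _ < dist (X w) (Y w)] in PC.
have mB : measurable B by exact: measurable_dist_gt.
have mC : measurable C by exact: measurable_dist_gt.
have ABC : A `<=` B `|` C.
  move=> w; rewrite /A /B /C /=; case: (ltP a (dist (Z w) (Y w))) => [|ZY]; first by left.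
  by right; have := dtri (Z w) (Y w) (X w); have := dC (Y w) (X w); lra.
have : (P A <= P B + P C)%E.
  apply: le_trans (measureU2 P mB mC).
  exact: le_measure (mem_set mA) (mem_set (measurableU _ _ mB mC)) ABC.
move: PC; rewrite (probability_fineK mA) (probability_fineK mB).
by rewrite (probability_fineK mC) -EFinD !lee_fin lte_fin; lra.
Qed.

Variables (Xs : nat -> S -> U) (hXs : forall n, is_rv dist (Xs n)).

Definition far_set (X : S -> U) (a delta : R) : set nat :=
  [set n | (delta%:E < P [set w | (a < dist (Xs n w) (X w))%R])%E].

Lemma far_set_sub (X : S -> U) (a a' delta delta' : R) : is_rv dist X ->
  a' <= a -> delta' <= delta -> far_set X a delta `<=` far_set X a' delta'.
Proof.
move=> Xrv a'a delta'delta n; rewrite /far_set /= => Xn.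
rewrite (le_lt_trans _ (lt_le_trans Xn _)) ?lee_fin //.
apply: le_measure; rewrite ?inE; try exact: measurable_dist_gt.
by move=> w /=; apply: le_lt_trans.
Qed.

Lemma far_set_window (X : S -> U) (a delta : R) (s : nat) : is_rv dist X ->
  exists2 e, 0 < e & forall Y, kyfan P dist X Y < e -> is_rv dist Y ->
    far_set X a delta `&` [set n | (n <= s)%N] `<=` far_set Y a delta.
Proof.
move=> Xrv.
have radius n : exists2 e, 0 < e & forall Y, kyfan P dist X Y < e ->
    is_rv dist Y -> far_set X a delta n -> far_set Y a delta n.
  have [Xn|notXn] := pselect (far_set X a delta n); last by exists 1 => // Y _ _ /notXn.
  have [e e0 stable] := prob_dist_gt_stable (hXs n) Xrv Xn.
  by exists e => // Y XY Yrv _; exact: stable.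
have [e e0 window] := exists_radius_forall_leq radius s.
by exists e => // Y XY Yrv n [Xn ns]; exact: window.
Qed.

Variable phi : set nat -> \bar R.
Hypotheses (phi_ge0 : forall A, (0 <= phi A)%E)
  (phi_mono : forall A B, A `<=` B -> (phi A <= phi B)%E)
  (phi_lsc : forall A, (fun t => phi (A `&` [set n | (n <= t)%N])) @ \oo --> phi A).

Definition far_tail_le (a delta : R) (t : nat) (b : \bar R) : set (S -> U) :=
  [set X | is_rv dist X /\ (phi (far_set X a delta `\` [set n | (n <= t)%N]) <= b)%E].

Lemma kyfan_closed_far_tail_le (a delta : R) (t : nat) (b : \bar R) :
  kyfan_closed P dist (far_tail_le a delta t b).
Proof.
split=> [X []//|X Xrv Xadh]; split=> //.
apply: (cvge_to_le (@phi_lsc _)); apply: nearW => s.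
have [e e0 window] := far_set_window a delta s Xrv.
have [Y [Yrv phiY] XY] := Xadh e e0.
apply: le_trans phiY; apply: phi_mono => n [[Xn nt] ns]; split=> //.
exact: (window Y XY Yrv).
Qed.

Lemma IP_LIM_Exh (r : R) : IP_LIM P dist (Exh phi) r Xs =
  \bigcap_i \bigcup_t far_tail_le (r + i.+1%:R^-1) i.+1%:R^-1 t (i.+1%:R^-1)%:E.
Proof.
have inv_gt0 i : 0 < i.+1%:R^-1 :> R by rewrite invr_gt0 ltr0n.
apply/seteqP; split=> X.
  move=> [Xrv Xlim] i _.
  have Xexh := Xlim _ _ (inv_gt0 i) (inv_gt0 i).
  by have [t Xt] := (Exh_tailP phi_ge0 phi_mono _).1 Xexh _ (inv_gt0 i); exists t.
move=> Xtails; have [_ _ [Xrv _]] := Xtails 0%N Logic.I.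
split=> // eps delta eps0 delta0; apply/(Exh_tailP phi_ge0 phi_mono) => e e0.
have [i] : exists i, 0 + i.+1%:R^-1 < Num.min e (Num.min eps delta).
  by apply: ltr_add_invr; rewrite !lt_min e0 eps0 delta0.
rewrite add0r !lt_min => /and3P[ie ieps idelta].
have [t _ [_ Xt]] := Xtails i Logic.I.
exists t; apply: le_trans (phi_mono _) (le_trans Xt _); last by rewrite lee_fin ltW.
move=> n [Xn nt]; split=> //; apply: far_set_sub Xn => //; last exact: ltW.
by rewrite lerD2l ltW.
Qed.

End KyFanTopology.

Theorem theorem2p5 (R : realType) (d : measure_display) (S : measurableType d)
  (P : probability S R) (U : Type) (dist : U -> U -> R)
  (hmet : is_metric dist) (hsep : separable_metric dist)
  (r : R) (hr : 0 <= r) (Xs : nat -> S -> U)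
  (hXs : forall n, is_rv dist (Xs n))
  (I : set (set nat)) (hI : analytic_P_ideal R I) :
  kyfan_Fsigmadelta P dist (IP_LIM P dist I r Xs).
Proof.
have [_ [phi [[[_ [phi_ge0 [phi_mono _]]] phi_lsc] ->]]] := hI.
eexists; split; last exact: IP_LIM_Exh.
by move=> i t; exact: kyfan_closed_far_tail_le.
Qed.
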